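(* Let $G$ be a graph on $n$ vertices with maximum degree at most $\Delta_{\max}$, let $t\in\mathbb{N}$, let $0<\varepsilon\leq\frac12$, and let $\eta$ satisfy $1\leq \eta\leq \frac{\varepsilon^2}{128\log n}\cdot\frac{\Delta_{\max}}{t}$. Let $c:E(G)\to[t]$ be a (not necessarily proper) edge-colouring such that for every edge $uv\in E(G)$ and every $i\in[t]$, $$s_{c(uv)}(u)+s_{c(uv)}(v)\leq \eta+s_i(u)+s_i(v).$$ Then $\tilde{d}\leq (1+\varepsilon)\frac{\Delta_{\max}}{t}$.
   Context: For a vertex $v$ and colour $i\in[t]$, $d_i(v)$ is the number of edges of colour $i$ incident to $v$, and $s_i(v)=\max\{d_i(v)-\frac{\Delta_{\max}}{t},0\}$ is the surplus of colour $i$ at $v$. $\tilde{d}=\max_{i\in[t]}\max_{v\in V(G)} d_i(v)$. *)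

From HB Require Import structures.
From mathcomp Require Import all_boot all_order all_algebra.
From mathcomp Require Import reals exp.
Set Implicit Arguments.
Unset Strict Implicit.
Unset Printing Implicit Defensive.
Import Order.TTheory GRing.Theory Num.Theory.
Local Open Scope ring_scope.

Definition simple_graph (T : finType) (e : rel T) : Prop :=
  (forall x, ~~ e x x) /\ (forall x y, e x y = e y x).

Definition deg (T : finType) (e : rel T) (v : T) : nat := #|[set u | e v u]|.

(* An edge-colouring c : E(G) -> [t], given as a function on ordered pairs
   that is symmetric on edges (only its values on edges matter). *)
Definition edge_colouring (T : finType) (e : rel T) (t : nat)
  (c : T -> T -> 'I_t) : Prop :=
  forall u v, e u v -> c u v = c v u.

Definition dcol (T : finType) (e : rel T) (t : nat) (c : T -> T -> 'I_t)
  (i : 'I_t) (v : T) : nat := #|[set u | e v u && (c v u == i)]|.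

Definition surplus (R : realType) (T : finType) (e : rel T) (t : nat)
  (c : T -> T -> 'I_t) (Dmax : nat) (i : 'I_t) (v : T) : R :=
  Num.max ((dcol e c i v)%:R - Dmax%:R / t%:R) 0.

Definition dtilde (T : finType) (e : rel T) (t : nat) (c : T -> T -> 'I_t) : nat :=
  \max_(i < t) \max_(v : T) dcol e c i v.

From HB Require Import structures.
From mathcomp Require Import all_boot all_order all_algebra.
From mathcomp Require Import reals exp.
From mathcomp Require Import ring lra.
Set Implicit Arguments.
Unset Strict Implicit.
Unset Printing Implicit Defensive.
Import Order.TTheory GRing.Theory Num.Theory.
Local Open Scope ring_scope.

(* Suppose d_a(v0) = \tilde d > (1 + eps) Dmax/t and put x = s_a(v0) > eps Dmax/t.
   Some colour b has d_b(v0) <= Dmax/t, so s_a(v0) - s_b(v0) = x.  By the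
   balancing condition every a-coloured edge leaving {v | s_a v - s_b v >= th}
   lands in {v | s_b v - s_a v >= th - eta}; double counting these edges shows
   that the second set is larger by the factor
   (Dmax/t + th) / (Dmax/t + x - th + eta).  Alternating the roles of a and b,
   the "gap levels" with thresholds x, x - eta, x - 2 eta, ... thus grow by a
   factor of at least 1 + 4 eps / 9 during the first K = floor (x / (4 eta))
   steps, so (1 + 4 eps / 9)^K <= n.  But K + 1 > eps Dmax / (4 t eta)
   >= 32 ln n / eps, which makes this impossible. *)

Lemma expr_le_geometric (R : numDomainType) (q : nat -> R) (r : R) (K : nat) :
  0 <= r -> 1 <= q 0%N -> (forall k, (k < K)%N -> r * q k <= q k.+1) ->
  r ^+ K <= q K.
Proof.
move=> r_ge0 q0 q_grow; elim: K q_grow => [//|K IH] q_grow.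
rewrite exprS; apply: le_trans (q_grow K _) => //.
by rewrite ler_wpM2l // IH // => k /ltnW; apply: q_grow.
Qed.

Lemma exists_le_avg (R : numFieldType) (t D : nat) (f : 'I_t -> nat) :
  (0 < t)%N -> (\sum_i f i <= D)%N -> exists i, (f i)%:R <= D%:R / t%:R :> R.
Proof.
move=> t_gt0 sum_le; case: (@arg_minnP _ (Ordinal t_gt0) xpredT f isT) => i _ i_min.
exists i; rewrite ler_pdivlMr ?ltr0n // -natrM ler_nat.
apply: leq_trans sum_le; apply: (@leq_trans (\sum_(j < t) f i)).
  by rewrite sum_nat_const card_ord mulnC.
by apply: leq_sum => j _; apply: i_min.
Qed.

Lemma bigmax_gt0_attained (I : finType) (F : I -> nat) :
  (0 < \max_i F i)%N -> exists i, \max_i F i = F i.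
Proof.
case: (posnP #|I|) => [I0|/(bigop.eq_bigmax F)[i ->]]; last by exists i.
by rewrite big_pred0 // => i; rewrite -[RHS](card0_eq I0 i).
Qed.

Lemma ln_ge1BVx (R : realType) (x : R) : 0 < x -> 1 - x^-1 <= ln x.
Proof.
move=> x_gt0; have := expR_ge1Dx (- ln x).
by rewrite expRN lnK ?posrE //; lra.
Qed.

Lemma ln_nat_ge_half (R : realType) (n : nat) :
  0 < ln (n%:R : R) -> 1 / 2 <= ln (n%:R : R).
Proof.
case: n => [|[|n]] L_gt0; first by rewrite ln0 ?ltxx in L_gt0.
  by rewrite ln1 ltxx in L_gt0.
have n_ge2 : 2 <= n.+2%:R :> R by rewrite (ler_nat R 2).
apply: le_trans (ln_ge1BVx (ltr0Sn R n.+1)).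
by rewrite lerBrDr -lerBrDl -div1r ler_pdivrMr; lra.
Qed.

Lemma ln_ge_of_ge1D (R : realType) (y r : R) :
  0 <= y -> y <= 2 / 9 -> 1 + y <= r -> 9 / 11 * y <= ln r.
Proof.
move=> y_ge0 y_le r_ge; have r_gt0 : 0 < r by lra.
have inv_le : r^-1 <= 1 - 9 / 11 * y.
  rewrite -div1r ler_pdivrMr //.
  have : (1 - 9 / 11 * y) * (1 + y) <= (1 - 9 / 11 * y) * r.
    by rewrite ler_wpM2l //; lra.
  nra.
by have := ln_ge1BVx r_gt0; lra.
Qed.

Lemma gap_ratio_ge (R : realFieldType) (eps del x k : R) :
  0 <= eps -> eps <= 1 / 2 -> 0 < del -> eps * del <= x -> 0 <= k -> 4 * k <= x ->
  1 + 4 * eps / 9 <= (del + x - k) / (del + k).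
Proof.
move=> eps_ge0 eps_le del_gt0 x_ge k_ge0 k_le.
rewrite ler_pdivlMr; last lra.
have : eps * k <= k / 2 by nra.
nra.
Qed.

Lemma gap_ratio_power_gt (R : realType) (n K : nat) (eps eta del x : R) :
  0 < eps -> eps <= 1 / 2 -> 1 <= eta -> 0 <= del ->
  eta <= eps ^+ 2 / (128 * ln n%:R) * del ->
  eps * del < x -> K%:R <= x / (4 * eta) < K.+1%:R ->
  n%:R < ((del + x - K%:R * eta) / (del + K%:R * eta)) ^+ K.
Proof.
set L := ln n%:R => eps_gt0 eps_le eta_ge1 del_ge0 eta_le x_gt /andP[K_le K_gt].
have L_gt0 : 0 < L.
  rewrite ltNge; apply/negP => L_le0.
  suff : eps ^+ 2 / (128 * L) * del <= 0 by lra.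
  apply: mulr_le0_ge0 => //; apply: mulr_ge0_le0; first exact: exprn_ge0 (ltW eps_gt0).
  by rewrite invr_le0; lra.
have eta_L : eta * (128 * L) <= eps ^+ 2 * del.
  by rewrite -ler_pdivlMr; [rewrite mulrAC | lra].
have del_gt0 : 0 < del.
  rewrite lt_def del_ge0 andbT; apply: contraTneq eta_L => ->.
  by rewrite mulr0 -ltNge; apply: mulr_gt0; lra.
have n_gt0 : 0 < n%:R :> R.
  by rewrite ltNge; apply: contraTN L_gt0 => /ln0 L0; rewrite /L L0 ltxx.
have L_ge : 1 / 2 <= L := ln_nat_ge_half L_gt0.
have eta4_gt0 : 0 < 4 * eta by lra.
rewrite ler_pdivlMr // in K_le; rewrite ltr_pdivrMr // -[K.+1%:R]natr1 in K_gt.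
set rho := _ / _.
have rho_ge : 1 + 4 * eps / 9 <= rho.
  by apply: gap_ratio_ge; rewrite ?mulr_ge0 //; lra.
have ln_rho : 4 * eps / 11 <= ln rho.
  by apply: le_trans (ln_ge_of_ge1D _ _ rho_ge); lra.
have L_lt : 32 * L < eps * (K%:R + 1).
  rewrite -(ltr_pM2r eta4_gt0).
  have : eps * x < eps * ((K%:R + 1) * (4 * eta)) by rewrite ltr_pM2l.
  have : eps * (eps * del) < eps * x by rewrite ltr_pM2l.
  rewrite expr2 in eta_L; lra.
have ln_rhoK : K%:R * (4 * eps / 11) <= K%:R * ln rho by rewrite ler_wpM2l.
have rho_gt0 : 0 < rho by lra.
by rewrite -ltr_ln ?posrE ?exprn_gt0 // lnXn // -[_ *+ K]mulr_natl -/L; lra.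
Qed.

Section Colouring.
Variables (T : finType) (e : rel T) (t : nat) (c : T -> T -> 'I_t).

Lemma dcolE i v : dcol e c i v = (\sum_u (e v u && (c v u == i)))%N.
Proof.
rewrite /dcol -sum1_card big_mkcond /=; apply: eq_bigr => u _.
by rewrite inE; case: (_ && _).
Qed.

Lemma sum_dcol v : (\sum_i dcol e c i v)%N = deg e v.
Proof.
under eq_bigr do rewrite dcolE.
rewrite exchange_big /= /deg -sum1_card [RHS]big_mkcond /=.
apply: eq_bigr => u _; rewrite inE.
case: (e v u) => /=; last by rewrite big1.
rewrite (bigD1 (c v u)) //= eqxx big1 ?addn0 // => i /negbTE.
by rewrite eq_sym => ->.
Qed.

Lemma dcol_le_dtilde i v : (dcol e c i v <= dtilde e c)%N.
Proof.
exact: leq_trans (@bigop.leq_bigmax _ (fun u => dcol e c i u) v)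
                 (@bigop.leq_bigmax _ (fun j => (\max_u dcol e c j u)%N) i).
Qed.

Lemma dtilde_attained :
  (0 < dtilde e c)%N -> exists i v, dcol e c i v = dtilde e c.
Proof.
rewrite /dtilde => /[dup] /bigmax_gt0_attained[i ->] /bigmax_gt0_attained[v ->].
by exists i, v.
Qed.

Hypothesis e_sym : symmetric e.
Hypothesis c_sym : edge_colouring e c.

Lemma sum_dcol_le (a : 'I_t) (A B : {set T}) :
  (forall v u, v \in A -> e v u -> c v u = a -> u \in B) ->
  (\sum_(v in A) dcol e c a v <= \sum_(u in B) dcol e c a u)%N.
Proof.
move=> AtoB; under eq_bigr do rewrite dcolE.
rewrite exchange_big /= [X in (_ <= X)%N]big_mkcond /=.
apply: leq_sum => u _; case: ifP => uB.
  rewrite dcolE big_mkcond /=; apply: leq_sum => v _.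
  case: ifP => // _; case evu: (e v u) => //=.
  by rewrite e_sym evu (c_sym evu).
rewrite big1 // => v vA; case evu: (e v u) => //=.
by case: eqP => // /(AtoB v u vA evu); rewrite uB.
Qed.

Variables (R : realType) (Dmax : nat) (eta : R).

Local Notation s := (surplus R e c Dmax).
Local Notation del := (Dmax%:R / t%:R : R).

Lemma surplus_ge0 i v : 0 <= s i v.
Proof. by rewrite /surplus le_max lexx orbT. Qed.

Lemma dcolB_le_surplus i v : (dcol e c i v)%:R - del <= s i v.
Proof. by rewrite /surplus le_max lexx. Qed.

Lemma le_surplus_pos th i v :
  0 < th -> (th <= s i v) = (del + th <= (dcol e c i v)%:R).
Proof.
move=> th_gt0; rewrite /surplus le_max [th <= 0]leNgt th_gt0 orbF.
by apply/idP/idP; lra.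
Qed.

Lemma surplus_eq0 i v : (dcol e c i v)%:R <= del -> s i v = 0.
Proof. by move=> d_le; apply/max_idPr; lra. Qed.

Lemma surplus_le i j u v :
  (dcol e c i u <= dcol e c j v)%N -> s i u <= s j v.
Proof. by move=> d_le; apply: le_max2 => //; rewrite lerD2r ler_nat. Qed.

Hypothesis balanced : forall u v, e u v -> forall i : 'I_t,
  s (c u v) u + s (c u v) v <= eta + s i u + s i v.

Lemma card_surplus_gap (a b : 'I_t) (th x : R) :
  0 < th -> (forall u, s b u <= x) ->
  #|[set v | th <= s a v - s b v]|%:R * (del + th)
    <= #|[set v | th - eta <= s b v - s a v]|%:R * (del + x - th + eta).
Proof.
move=> th_gt0 sb_le; set A := [set v | _]; set B := [set v | _].
have dcolA v : v \in A -> del + th <= (dcol e c a v)%:R.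
  rewrite inE -le_surplus_pos // => gap.
  by have := surplus_ge0 b v; lra.
have dcolB u : u \in B -> (dcol e c a u)%:R <= del + x - th + eta.
  rewrite inE => gap.
  by have := dcolB_le_surplus a u; have := sb_le u; lra.
have AtoB v u : v \in A -> e v u -> c v u = a -> u \in B.
  rewrite !inE => gap evu cvu.
  by have := balanced evu b; rewrite cvu; lra.
have sumA : #|A|%:R * (del + th) <= \sum_(v in A) (dcol e c a v)%:R.
  by rewrite mulr_natl -sumr_const; apply: ler_sum.
have sumB : \sum_(u in B) (dcol e c a u)%:R <= #|B|%:R * (del + x - th + eta).
  by rewrite mulr_natl -sumr_const; apply: ler_sum.
apply: le_trans sumA _; apply: le_trans sumB.
by rewrite -!natr_sum ler_nat sum_dcol_le.
Qed.

Lemma card_ge_gap_ratio (a b : 'I_t) (v0 : T) (x : R) (K : nat) :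
  0 < eta -> (forall i u, s i u <= x) -> x <= s a v0 - s b v0 ->
  K%:R * eta < x ->
  ((del + x - K%:R * eta) / (del + K%:R * eta)) ^+ K <= #|T|%:R.
Proof.
move=> eta_gt0 s_le gap0 K_lt.
have del_ge0 : 0 <= del by rewrite divr_ge0.
pose Q k := if odd k then [set v | x - k%:R * eta <= s b v - s a v]
            else [set v | x - k%:R * eta <= s a v - s b v].
set rho := (del + x - K%:R * eta) / _.
have Keta_ge0 : 0 <= K%:R * eta by rewrite mulr_ge0 // ltW.
have rho_ge0 : 0 <= rho by apply: divr_ge0; lra.
have Q_grow k : (k < K)%N -> rho * #|Q k|%:R <= #|Q k.+1|%:R.
  move=> kK; have kS : k.+1%:R = k%:R + 1 :> R by rewrite natr1.
  have kK_eta : k.+1%:R * eta <= K%:R * eta by rewrite ler_wpM2r ?ler_nat ?ltW.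
  rewrite kS in kK_eta.
  have count : #|Q k|%:R * (del + (x - k%:R * eta))
               <= #|Q k.+1|%:R * (del + k.+1%:R * eta).
    have th_gt0 : 0 < x - k%:R * eta by lra.
    have shift : x - k.+1%:R * eta = x - k%:R * eta - eta by rewrite kS; ring.
    have side : del + k.+1%:R * eta = del + x - (x - k%:R * eta) + eta.
      by rewrite kS; ring.
    by rewrite /Q oddS side shift; case: (odd k) => /=; apply: card_surplus_gap.
  have D_gt0 : 0 < del + k.+1%:R * eta by rewrite ltr_wpDl ?mulr_gt0 ?ltr0Sn.
  have rho_le : rho * (del + k.+1%:R * eta) <= del + (x - k%:R * eta).
    have den_gt0 : 0 < del + K%:R * eta by lra.
    apply: le_trans (_ : rho * (del + K%:R * eta) <= _).
      by rewrite ler_wpM2l // lerD2l kS.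
    by rewrite divfK ?gt_eqF //; lra.
  rewrite -(ler_pM2r D_gt0) mulrAC; apply: le_trans count.
  by rewrite mulrC ler_wpM2l.
apply: le_trans (expr_le_geometric rho_ge0 _ Q_grow) _.
  by rewrite ler1n card_gt0; apply/set0Pn; exists v0; rewrite inE mul0r subr0.
by rewrite ler_nat max_card.
Qed.

End Colouring.

Theorem theorem4p2 (R : realType) (T : finType) (e : rel T) (Dmax t : nat)
  (eps eta : R) (c : T -> T -> 'I_t) :
  simple_graph e ->
  (forall v, (deg e v <= Dmax)%N) ->
  0 < eps -> eps <= 1 / 2 ->
  1 <= eta ->
  eta <= eps ^+ 2 / (128 * ln (#|T|%:R)) * (Dmax%:R / t%:R) ->
  edge_colouring e c ->
  (forall u v, e u v -> forall i : 'I_t,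
     surplus R e c Dmax (c u v) u + surplus R e c Dmax (c u v) v
       <= eta + surplus R e c Dmax i u + surplus R e c Dmax i v) ->
  (dtilde e c)%:R <= (1 + eps) * (Dmax%:R / t%:R) :> R.
Proof.
move=> [_ e_sym] deg_le eps_gt0 eps_le eta_ge1 eta_le c_sym balanced.
set del := Dmax%:R / t%:R; rewrite leNgt; apply/negP => dtilde_gt.
have del_ge0 : 0 <= del by rewrite divr_ge0.
have [a [v0 dv0]] : exists a v0, dcol e c a v0 = dtilde e c.
  apply: dtilde_attained; rewrite -(ltr0n R); apply: le_lt_trans dtilde_gt.
  by rewrite mulr_ge0 //; lra.
have [b dv0b] : exists b, (dcol e c b v0)%:R <= del.
  by apply: exists_le_avg; [exact: leq_ltn_trans (ltn_ord a) | rewrite sum_dcol].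
set x := surplus R e c Dmax a v0.
have x_max i u : surplus R e c Dmax i u <= x.
  by apply: surplus_le; rewrite dv0 dcol_le_dtilde.
have x_gt : eps * del < x.
  by have := dcolB_le_surplus e c R Dmax a v0; rewrite dv0 -/del -/x; lra.
have x_gt0 : 0 < x by apply: le_lt_trans x_gt; rewrite mulr_ge0 // ltW.
have eta_gt0 : 0 < eta by lra.
have x4_ge0 : 0 <= x / (4 * eta) by rewrite divr_ge0 //; lra.
have K_itv := truncn_itv x4_ge0.
set K := Num.truncn _ in K_itv.
have K_lt : K%:R * eta < x.
  by case/andP: K_itv => [K_le _]; rewrite ler_pdivlMr in K_le; lra.
have := gap_ratio_power_gt eps_gt0 eps_le eta_ge1 del_ge0 eta_le x_gt K_itv.
rewrite ltNge => /negP; apply.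
apply: (card_ge_gap_ratio e_sym c_sym balanced (a := a) (b := b) (v0 := v0)
          eta_gt0 x_max _ K_lt).
by rewrite (surplus_eq0 dv0b) subr0.
Qed.
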